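(* Let $k\ge 2$, $n\ge1$, and let $L_n$, $\varphi$ and the weight $w$ be as in the context. For all $\mathbf a,\mathbf b\in L_n$ with $a_1=0$ and $b_1=k-1$, we have $w(\varphi(\mathbf a))<w(\varphi(\mathbf b))$.
   Context: $E=\{0,\dots,k-1\}$. For $\mathbf a\in E^m$, $w(\mathbf a)=a_1+\dots+a_m$, and $\mathcal B_t=\{\mathbf a\in E^n: w(\mathbf a)=t\}$. Let $g=\lfloor n(k-1)/2\rfloor$ and $C_i=\{\mathbf a\in E^n: a_1=i\}$. Define $L_n=(\mathcal B_0\cup\dots\cup\mathcal B_g)\cap(C_0\cup C_{k-1})$ if $n(k-1)$ is odd, and $L_n=((\mathcal B_0\cup\dots\cup\mathcal B_{g-1})\cap(C_0\cup C_{k-1}))\cup(\mathcal B_g\cap C_0)$ if $n(k-1)$ is even. For $a\in E$ let $\overline a=k-1-a$. Define $\varphi:L_n\to E^{n-1}$ by $\varphi(a_1,\dots,a_n)=(a_2,\dots,a_n)$ if $a_1=0$ and $\varphi(a_1,\dots,a_n)=(\overline{a}_2,\dots,\overline{a}_n)$ if $a_1=k-1$. *)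

From mathcomp Require Import all_boot.
Set Implicit Arguments. Unset Strict Implicit. Unset Printing Implicit Defensive.

(* E = {0,...,k-1} is 'I_k ; E^m is m.-tuple 'I_k. *)

Definition weight (k m : nat) (a : m.-tuple 'I_k) : nat := \sum_(x <- a) (x : nat).

(* first coordinate a_1 (as a nat); meaningful when m >= 1 *)
Definition first_coord (k m : nat) (a : m.-tuple 'I_k) : nat := head 0 (map (@nat_of_ord k) a).

Definition in_L (k n : nat) (a : n.-tuple 'I_k) : bool :=
  let g := (n * (k - 1))./2 in
  if odd (n * (k - 1)) then
    (weight a <= g) && ((first_coord a == 0) || (first_coord a == k - 1))
  else
    ((weight a < g) && ((first_coord a == 0) || (first_coord a == k - 1)))
    || ((weight a == g) && (first_coord a == 0)).

(* phi : L_n -> E^(n-1); complement bar a = k-1-a is rev_ord *)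
Definition phi (k n : nat) (a : n.-tuple 'I_k) : n.-1.-tuple 'I_k :=
  if first_coord a == 0 then behead_tuple a
  else map_tuple (@rev_ord k) (behead_tuple a).

From mathcomp Require Import all_boot.
From mathcomp Require Import zify.

Set Implicit Arguments.
Unset Strict Implicit.

(* Elements of L_n have weight at most n(k-1)/2, strictly less when the first
   coordinate is k-1.  Removing a leading 0 keeps the weight, while removing a
   leading k-1 and complementing the rest turns weight w into n(k-1) - w, so
   w(phi a) <= n(k-1)/2 < w(phi b). *)

Lemma weight_map_rev_ord (k m : nat) (t : m.-tuple 'I_k) :
  weight (map_tuple (@rev_ord k) t) + weight t = m * (k - 1).
Proof.
rewrite /weight /= -[in RHS](size_tuple t); case: t => s _ /=.
elim: s => [|x s IH] /=; first by rewrite !big_nil.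
rewrite !big_cons /= mulSn -IH; have := ltn_ord x; lia.
Qed.

Lemma weight_behead (k m : nat) (a : m.-tuple 'I_k) :
  weight a = first_coord a + weight (behead_tuple a).
Proof.
by case: a => [[|x s] ?]; rewrite /weight /first_coord /= ?big_nil ?big_cons.
Qed.

Lemma in_L_weight_double_le (k n : nat) (a : n.-tuple 'I_k) :
  in_L a -> (weight a).*2 <= n * (k - 1).
Proof.
have := odd_double_half (n * (k - 1)); rewrite /in_L.
case: ifP => _ /= HN; first by case/andP; lia.
by case/orP => /andP [Hw _]; move: Hw; lia.
Qed.

Lemma in_L_weight_double_lt (k n : nat) (a : n.-tuple 'I_k) :
  0 < first_coord a -> in_L a -> (weight a).*2 < n * (k - 1).
Proof.
have := odd_double_half (n * (k - 1)); rewrite /in_L.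
case: ifP => _ /= HN Ha; first by case/andP; lia.
by case/orP => /andP [Hw Hf]; move: Hw Hf; lia.
Qed.

Lemma phi_first0 (k n : nat) (a : n.-tuple 'I_k) :
  first_coord a = 0 -> phi a = behead_tuple a.
Proof. by rewrite /phi => ->. Qed.

Lemma phi_first_neq0 (k n : nat) (a : n.-tuple 'I_k) :
  first_coord a != 0 -> phi a = map_tuple (@rev_ord k) (behead_tuple a).
Proof. by rewrite /phi => /negPf ->. Qed.

Theorem lemma1 (k n : nat) (hk : 2 <= k) (hn : 1 <= n)
  (a b : n.-tuple 'I_k) :
  in_L a -> in_L b -> first_coord a = 0 -> first_coord b = k - 1 ->
  weight (phi a) < weight (phi b).
Proof.
move=> La Lb fa fb.
have fb_pos : 0 < first_coord b by rewrite fb; lia.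
have wa := in_L_weight_double_le La.
have wb := in_L_weight_double_lt fb_pos Lb.
have wphib := weight_map_rev_ord (behead_tuple b).
rewrite phi_first0 // phi_first_neq0 -?lt0n //.
move: wa wb wphib; rewrite (weight_behead a) (weight_behead b) fa fb.
have : n.-1 * (k - 1) + (k - 1) = n * (k - 1) by rewrite -mulSnr prednK.
lia.
Qed.
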